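(* Let $\phi$ be a positive, trace-preserving linear map on $\mathcal M(d;\mathbb C)$ whose space of fixed points $\eta_\phi=\{X:\phi(X)=X\}$ has dimension strictly greater than $1$. Then $\phi$ admits a semipositive fixed point, i.e. a nonzero $A\ge 0$ with $\det A=0$ and $\phi(A)=A$.
   Context: A linear map is positive if it maps positive semidefinite matrices to positive semidefinite matrices. Every positive trace-preserving map has a positive semidefinite fixed point of unit trace, and it maps Hermitian matrices to Hermitian matrices. *)

From HB Require Import structures.
From mathcomp Require Import all_boot all_order all_algebra.
Set Implicit Arguments. Unset Strict Implicit. Unset Printing Implicit Defensive.
Import Order.TTheory GRing.Theory Num.Theory.
Local Open Scope ring_scope.

Definition adjmx (C : numClosedFieldType) m n (A : 'M[C]_(m, n)) : 'M[C]_(n, m) :=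
  (map_mx Num.conj A)^T.

Definition hermitian (C : numClosedFieldType) n (A : 'M[C]_n) : bool :=
  adjmx A == A.

Definition psd (C : numClosedFieldType) n (A : 'M[C]_n) : Prop :=
  hermitian A /\ forall x : 'cV[C]_n, 0 <= (adjmx x *m A *m x) 0 0.

Definition positive_map (C : numClosedFieldType) n (phi : 'End('M[C]_n)) : Prop :=
  forall A : 'M[C]_n, psd A -> psd (phi A).

Definition trace_preserving (C : numClosedFieldType) n (phi : 'End('M[C]_n)) : Prop :=
  forall A : 'M[C]_n, \tr (phi A) = \tr A.

(* A Hermitian fixed point X of phi splits as X = X+ - X- into PSD positive
   and negative parts.  Positivity makes phi X+ - phi X- a PSD splitting of
   phi X = X, and trace preservation gives it the trace of X+; in an
   eigenbasis of X the splitting into positive and negative parts is the only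
   PSD splitting of minimal trace, so phi X+ = X+.  A fixed space of dimension
   at least 2 meets the kernel of the trace, and since phi commutes with taking
   adjoints, the Hermitian or the anti-Hermitian part of such a fixed point is
   a nonzero traceless Hermitian fixed point X.  Its eigenvalues then take both
   signs, so X+ is nonzero and singular. *)

From HB Require Import structures.
From mathcomp Require Import all_boot all_order all_algebra.
From mathcomp Require Import sesquilinear spectral ring zify.
Set Implicit Arguments. Unset Strict Implicit. Unset Printing Implicit Defensive.
Import Order.TTheory GRing.Theory Num.Theory Num.Def.
Local Open Scope ring_scope.

Section RealSum.
Variables (R : numDomainType) (I : finType) (f : I -> R).

Lemma real_sum_eq0_sign : (forall i, f i \is Num.real) -> \sum_i f i = 0 ->
  (exists i, f i != 0) -> (exists i, 0 < f i) /\ (exists j, f j < 0).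
Proof.
move=> freal sum0 [k fk0]; split.
- have [i|fle0] := pickP (fun i => 0 < f i); first by exists i.
  suff /eqP : - f k = 0 by rewrite oppr_eq0 (negbTE fk0).
  have sumN0 : \sum_i - f i = 0 by rewrite sumrN sum0 oppr0.
  by apply: (psumr_eq0P _ sumN0) => // i _; rewrite oppr_ge0 real_leNgt ?real0 ?fle0.
- have [j|fge0] := pickP (fun j => f j < 0); first by exists j.
  suff /eqP : f k = 0 by rewrite (negbTE fk0).
  by apply: (psumr_eq0P _ sum0) => // i _; rewrite real_leNgt ?real0 ?fge0.
Qed.

End RealSum.

Section Adjoint.
Variable C : numClosedFieldType.

Lemma adjmxE m n (A : 'M[C]_(m, n)) : adjmx A = (A ^t conjC)%sesqui.
Proof. by rewrite /adjmx map_trmx. Qed.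

Lemma adjmxK m n (A : 'M[C]_(m, n)) : adjmx (adjmx A) = A.
Proof. by apply/matrixP => i j; rewrite !mxE conjCK. Qed.

Lemma adjmxD m n (A B : 'M[C]_(m, n)) : adjmx (A + B) = adjmx A + adjmx B.
Proof. by apply/matrixP => i j; rewrite !mxE rmorphD. Qed.

Lemma adjmxN m n (A : 'M[C]_(m, n)) : adjmx (- A) = - adjmx A.
Proof. by apply/matrixP => i j; rewrite !mxE rmorphN. Qed.

Lemma adjmxB m n (A B : 'M[C]_(m, n)) : adjmx (A - B) = adjmx A - adjmx B.
Proof. by rewrite adjmxD adjmxN. Qed.

Lemma adjmxZ m n c (A : 'M[C]_(m, n)) : adjmx (c *: A) = c^* *: adjmx A.
Proof. by apply/matrixP => i j; rewrite !mxE rmorphM. Qed.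

Lemma adjmxMn m n k (A : 'M[C]_(m, n)) : adjmx (A *+ k) = adjmx A *+ k.
Proof. by rewrite -!scaler_nat adjmxZ rmorph_nat. Qed.

Lemma adjmx_mul m n p (A : 'M[C]_(m, n)) (B : 'M[C]_(n, p)) :
  adjmx (A *m B) = adjmx B *m adjmx A.
Proof. by rewrite /adjmx map_mxM trmx_mul. Qed.

Lemma adjmx_delta m n (i : 'I_m) (j : 'I_n) :
  adjmx (delta_mx i j : 'M[C]_(m, n)) = delta_mx j i.
Proof.
by apply/matrixP => a b; rewrite !mxE; do 2!case: (_ == _); rewrite ?rmorph1 ?rmorph0.
Qed.

Lemma adjmx_diag n (e : 'rV[C]_n) : adjmx (diag_mx e) = diag_mx (map_mx conjC e).
Proof. by apply/matrixP => i j; rewrite !mxE rmorphMn; case: eqVneq => [->|]. Qed.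

Lemma mxtrace_adjmx n (A : 'M[C]_n) : \tr (adjmx A) = (\tr A)^*.
Proof. by rewrite /mxtrace rmorph_sum; apply: eq_bigr => i _; rewrite !mxE. Qed.

Lemma hermitianE n (A : 'M[C]_n) : hermitian A = (A \is hermsymmx).
Proof. by rewrite is_hermitianmxE expr0 scale1r -adjmxE eq_sym. Qed.

Definition herm_re n (M : 'M[C]_n) := M + adjmx M.
Definition herm_im n (M : 'M[C]_n) := 'i *: (adjmx M - M).

Lemma hermitian_herm_re n (M : 'M[C]_n) : hermitian (herm_re M).
Proof. by apply/eqP; rewrite /herm_re adjmxD adjmxK addrC. Qed.

Lemma hermitian_herm_im n (M : 'M[C]_n) : hermitian (herm_im M).
Proof.
by apply/eqP; rewrite /herm_im adjmxZ adjmxB adjmxK conjCi scaleNr -scalerN opprB.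
Qed.

Lemma herm_reim n (M : 'M[C]_n) : M *+ 2 = herm_re M + 'i *: herm_im M.
Proof.
by rewrite /herm_re /herm_im scalerA -expr2 sqrCi scaleN1r opprB addrACA subrr addr0 mulr2n.
Qed.

Lemma herm_reim_adjmx n (M : 'M[C]_n) : adjmx M *+ 2 = herm_re M - 'i *: herm_im M.
Proof.
rewrite /herm_re /herm_im scalerA -expr2 sqrCi scaleN1r opprK [M + _]addrC.
by rewrite addrACA subrr addr0 mulr2n.
Qed.

Lemma herm_reim_eq0 n (M : 'M[C]_n) : herm_re M = 0 -> herm_im M = 0 -> M = 0.
Proof.
move=> re0 im0; apply/eqP; have /eqP := herm_reim M.
by rewrite re0 im0 scaler0 addr0 -scaler_nat scaler_eq0 pnatr_eq0.
Qed.

End Adjoint.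

Section PositiveSemidefinite.
Variables (C : numClosedFieldType) (n : nat).
Implicit Types (Y : 'M[C]_n) (i j : 'I_n).

Lemma qform_delta Y i j : (delta_mx 0 i *m Y *m delta_mx j 0 : 'M[C]_1) = (Y i j)%:M.
Proof. by apply/matrixP => a b; rewrite !ord1 -mulmxA -colE -rowE !mxE eqxx mulr1n. Qed.

Lemma psd_entry_ge0 Y i : psd Y -> 0 <= Y i i.
Proof.
by move=> [_ /(_ (delta_mx i 0))]; rewrite adjmx_delta qform_delta mxE eqxx mulr1n.
Qed.

Lemma psd_entryC Y i j : psd Y -> Y j i = (Y i j)^*.
Proof. by move=> [/eqP YE _]; rewrite -{1}YE !mxE. Qed.

(* The form at [c e_i + e_j] is [|c|^2 Y_ii + 2 Re (c^* Y_ij) + Y_jj]; with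
   [Y_ii = 0] and [c^* Y_ij = -(Y_jj + 1)] it is negative unless [Y_ij = 0]. *)
Lemma psd_row_eq0 Y i j : psd Y -> Y i i = 0 -> Y i j = 0.
Proof.
move=> psdY Yii0; have Yjj_ge0 := psd_entry_ge0 j psdY.
have YjiE := psd_entryC i j psdY; case: psdY => _ qY.
apply/eqP; apply: contraT => Yij0.
set y := Y i j in YjiE Yij0; set c := - (Y j j + 1) / y^*.
have Yjj_real : (Y j j)^* = Y j j by apply/CrealP; apply: ger0_real.
have cyE : c * y^* = - (Y j j + 1) by rewrite mulrVK // unitfE conjC_eq0.
have cyE' : c^* * y = - (Y j j + 1).
  by rewrite -[y]conjCK -rmorphM cyE rmorphN rmorphD rmorph1 -/(conjC (Y j j)) Yjj_real.
have := qY (c *: delta_mx i 0 + delta_mx j 0).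
rewrite adjmxD adjmxZ !adjmx_delta !mulmxDl !mulmxDr -!scalemxAl -!scalemxAr.
rewrite !qform_delta !mxE !eqxx !mulr1n Yii0 YjiE -/y cyE cyE' !mulr0 add0r.
have -> : - (Y j j + 1) + (- (Y j j + 1) + Y j j) = - (Y j j + 2) by ring.
by rewrite oppr_ge0 real_leNgt ?ger0_real ?addr_ge0 // ltr_wpDl.
Qed.

Lemma psd_congr m (P : 'M[C]_(m, n)) Y : psd Y -> psd (P *m Y *m adjmx P).
Proof.
move=> [/eqP YE qY]; split; first by apply/eqP; rewrite !adjmx_mul adjmxK YE mulmxA.
by move=> x; have := qY (adjmx P *m x); rewrite adjmx_mul adjmxK !mulmxA.
Qed.

Lemma psd_diag_mx (e : 'rV[C]_n) : (forall i, 0 <= e 0 i) -> psd (diag_mx e).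
Proof.
move=> e_ge0; split.
  apply/eqP; rewrite adjmx_diag; congr diag_mx; apply/matrixP => i j.
  by rewrite !ord1 mxE; apply/CrealP; apply: ger0_real.
move=> x; rewrite mul_mx_diag mxE; apply: sumr_ge0 => k _.
by rewrite !mxE mulrAC mulr_ge0 // mulrC mul_conjC_ge0.
Qed.

End PositiveSemidefinite.

Section PositivePart.
Variable C : numClosedFieldType.

Definition pospart (x : C) := if 0 <= x then x else 0.
Definition negpart (x : C) := if 0 <= x then 0 else - x.

Lemma pospart_ge0 x : 0 <= pospart x.
Proof. by rewrite /pospart; case: ifP. Qed.

Lemma negpart_ge0 x : x \is Num.real -> 0 <= negpart x.
Proof.
rewrite /negpart => xreal; case: ifPn => // x_lt0.
by rewrite oppr_ge0 ltW // real_ltNge ?real0.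
Qed.

Lemma pospartBnegpart x : pospart x - negpart x = x.
Proof. by rewrite /pospart /negpart; case: ifP; rewrite ?subr0 ?sub0r ?opprK. Qed.

(* The diagonal of [A] exceeds [pospart d] by nonnegative diagonal entries of
   [A] or [B]; equal traces force this excess to vanish, and a PSD matrix
   vanishes on the rows where its diagonal does. *)
Lemma min_trace_psd_decomp n (A B : 'M[C]_n) (d : 'rV[C]_n) : psd A -> psd B ->
  A - B = diag_mx d -> \tr A = \sum_i pospart (d 0 i) ->
  A = diag_mx (map_mx pospart d).
Proof.
move=> psdA psdB ABd trA.
have ABdE i j : A i j - B i j = d 0 i *+ (i == j).
  by move/matrixP: ABd => /(_ i j); rewrite !mxE.
have ABdiag i : A i i - B i i = d 0 i by rewrite ABdE eqxx mulr1n.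
pose excess i := if 0 <= d 0 i then B i i else A i i.
have AiiE i : A i i = pospart (d 0 i) + excess i.
  by rewrite /excess /pospart; case: ifP; rewrite ?add0r // -ABdiag addrNK.
have excess_sum0 : \sum_i excess i = 0.
  apply: (addrI (\sum_i pospart (d 0 i))); rewrite -big_split /= addr0 -trA.
  by apply: eq_bigr => i _; apply/esym/AiiE.
have excess0 i : excess i = 0.
  apply: (psumr_eq0P _ excess_sum0) => // k _.
  by rewrite /excess; case: ifP => _; apply: psd_entry_ge0.
apply/matrixP => i j; rewrite !mxE; move: (excess0 i); rewrite /excess /pospart.
case: ifP => _ Mii0; last by rewrite (psd_row_eq0 j psdA Mii0) mul0rn.
by rewrite -ABdE (psd_row_eq0 j psdB Mii0) subr0.
Qed.

End PositivePart.

Section Spectral.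
Variables (C : numClosedFieldType) (n : nat).
Implicit Types (X M : 'M[C]_n).

Lemma mul_spectralmx_adj X : spectralmx X *m adjmx (spectralmx X) = 1%:M.
Proof. by rewrite adjmxE; apply/unitarymxP/spectral_unitarymx. Qed.

Lemma mul_adj_spectralmx X : adjmx (spectralmx X) *m spectralmx X = 1%:M.
Proof.
by rewrite adjmxE -invmx_unitary ?spectral_unitarymx // mulVmx ?spectral_unit.
Qed.

Lemma spectral_conjK X M :
  spectralmx X *m (adjmx (spectralmx X) *m M *m spectralmx X) *m adjmx (spectralmx X) = M.
Proof. by rewrite !mulmxA mul_spectralmx_adj mul1mx -mulmxA mul_spectralmx_adj mulmx1. Qed.

Lemma spectral_conjVK X M :
  adjmx (spectralmx X) *m (spectralmx X *m M *m adjmx (spectralmx X)) *m spectralmx X = M.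
Proof. by rewrite !mulmxA mul_adj_spectralmx mul1mx -mulmxA mul_adj_spectralmx mulmx1. Qed.

Lemma hermitian_spectral X : hermitian X ->
  X = adjmx (spectralmx X) *m diag_mx (spectral_diag X) *m spectralmx X.
Proof.
rewrite hermitianE adjmxE -invmx_unitary ?spectral_unitarymx //.
by move=> /hermitian_normalmx /orthomx_spectralP.
Qed.

Lemma spectral_diag_real X i : hermitian X -> spectral_diag X 0 i \is Num.real.
Proof. by rewrite hermitianE => /hermitian_spectral_diag_real /mxOverP; apply. Qed.

Definition posmx X :=
  adjmx (spectralmx X) *m diag_mx (map_mx (@pospart C) (spectral_diag X)) *m spectralmx X.
Definition negmx X :=
  adjmx (spectralmx X) *m diag_mx (map_mx (@negpart C) (spectral_diag X)) *m spectralmx X.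

Lemma psd_posmx X : psd (posmx X).
Proof.
rewrite /posmx -{2}[spectralmx X]adjmxK; apply/psd_congr/psd_diag_mx => i.
by rewrite mxE pospart_ge0.
Qed.

Lemma psd_negmx X : hermitian X -> psd (negmx X).
Proof.
move=> hX; rewrite /negmx -{2}[spectralmx X]adjmxK; apply/psd_congr/psd_diag_mx => i.
by rewrite mxE negpart_ge0 ?spectral_diag_real.
Qed.

Lemma posmxBnegmx X : hermitian X -> posmx X - negmx X = X.
Proof.
move=> /hermitian_spectral {3}->; rewrite -mulmxBl -mulmxBr -linearB /=.
by congr (_ *m diag_mx _ *m _); apply/matrixP => i j; rewrite !mxE pospartBnegpart.
Qed.

Lemma mxtrace_posmx X : \tr (posmx X) = \sum_i pospart (spectral_diag X 0 i).
Proof.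
rewrite /posmx mxtrace_mulC mulmxA mul_spectralmx_adj mul1mx mxtrace_diag.
by apply: eq_bigr => i _; rewrite mxE.
Qed.

Lemma posmx_diag X : spectralmx X *m posmx X *m adjmx (spectralmx X) =
  diag_mx (map_mx (@pospart C) (spectral_diag X)).
Proof. exact: spectral_conjK. Qed.

Lemma posmx_neq0 X i : 0 < spectral_diag X 0 i -> posmx X != 0.
Proof.
move=> di_gt0; apply/eqP => posmx0; have := posmx_diag X.
rewrite posmx0 mulmx0 mul0mx => /matrixP/(_ i i).
by rewrite !mxE eqxx mulr1n /pospart (ltW di_gt0) => di0; rewrite -di0 ltxx in di_gt0.
Qed.

Lemma det_posmx X j : spectral_diag X 0 j < 0 -> \det (posmx X) = 0.
Proof.
move=> dj_lt0; rewrite /posmx !det_mulmx det_diag (bigD1 j) //= mxE /pospart.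
by rewrite real_leNgt ?real0 ?ltr0_real // dj_lt0 mul0r mulr0 mul0r.
Qed.

Lemma traceless_spectral_diag_sign X : hermitian X -> \tr X = 0 -> X != 0 ->
  (exists i, 0 < spectral_diag X 0 i) /\ (exists j, spectral_diag X 0 j < 0).
Proof.
move=> hX trX X0; apply: real_sum_eq0_sign => [i||]; first exact: spectral_diag_real.
  rewrite -mxtrace_diag -trX {2}(hermitian_spectral hX) mxtrace_mulC mulmxA.
  by rewrite mul_spectralmx_adj mul1mx.
have [i di0|d0] := pickP (fun i => spectral_diag X 0 i != 0); first by exists i.
move: X0; rewrite {1}(hermitian_spectral hX).
suff -> : spectral_diag X = 0 by rewrite linear0 mulmx0 mul0mx eqxx.
by apply/matrixP => a b; rewrite ord1 mxE; apply/eqP/negbFE/d0.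
Qed.

End Spectral.

Section PositiveMap.
Variables (C : numClosedFieldType) (n : nat) (phi : 'End('M[C]_n)).
Hypothesis phi_pos : positive_map phi.

Lemma positive_map_hermitian H : hermitian H -> hermitian (phi H).
Proof.
move=> hH; rewrite -(posmxBnegmx hH) linearB /=.
have [/eqP posE _] := phi_pos (psd_posmx H).
have [/eqP negE _] := phi_pos (psd_negmx hH).
by apply/eqP; rewrite adjmxB posE negE.
Qed.

Lemma positive_map_adjmx M : phi (adjmx M) = adjmx (phi M).
Proof.
have /eqP phi_re := positive_map_hermitian (hermitian_herm_re M).
have /eqP phi_im := positive_map_hermitian (hermitian_herm_im M).
apply: (@scalerI _ _ 2%:R); first by rewrite pnatr_eq0.
rewrite !scaler_nat -adjmxMn -[phi (adjmx M) *+ 2]linearMn -[phi M *+ 2]linearMn.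
rewrite herm_reim_adjmx herm_reim.
move: (herm_re M) (herm_im M) phi_re phi_im => re im phi_re phi_im.
by rewrite linearB linearD !linearZ adjmxD adjmxZ conjCi phi_re phi_im scaleNr /= scalerN.
Qed.

Hypothesis phi_tp : trace_preserving phi.

Lemma posmx_fixed X : hermitian X -> phi X = X -> phi (posmx X) = posmx X.
Proof.
move=> hX fixX; set P := spectralmx X.
have psdA := psd_congr P (phi_pos (psd_posmx X)).
have psdB := psd_congr P (phi_pos (psd_negmx hX)).
have ABd : P *m phi (posmx X) *m adjmx P - P *m phi (negmx X) *m adjmx P =
           diag_mx (spectral_diag X).
  rewrite -mulmxBl -mulmxBr -linearB /= posmxBnegmx // fixX.
  by rewrite {1}(hermitian_spectral hX) spectral_conjK.
have trA : \tr (P *m phi (posmx X) *m adjmx P) = \sum_i pospart (spectral_diag X 0 i).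
  by rewrite mxtrace_mulC mulmxA mul_adj_spectralmx mul1mx phi_tp mxtrace_posmx.
have := min_trace_psd_decomp psdA psdB ABd trA.
by rewrite -posmx_diag => /(congr1 (fun M => adjmx P *m M *m P)); rewrite !spectral_conjVK.
Qed.

End PositiveMap.

Lemma fixedSpace_traceless (F : fieldType) n (phi : 'End('M[F]_n)) :
  (1 < \dim (fixedSpace phi))%N -> exists Y, [/\ Y != 0, phi Y = Y & \tr Y = 0].
Proof.
move=> dim_fix; pose tr : 'Hom('M[F]_n, F^o) := linfun (@mxtrace F n : 'M[F]_n -> F^o).
have dim_img : (\dim (tr @: fixedSpace phi) <= 1)%N.
  by apply: leq_trans (dimvS (subvf _)) _; rewrite dimvf.
have dim_ker : (0 < \dim (fixedSpace phi :&: lker tr))%N.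
  by have := limg_ker_dim tr (fixedSpace phi); lia.
have /memv_capP [YU Yker] := memv_pick (fixedSpace phi :&: lker tr).
exists (vpick (fixedSpace phi :&: lker tr)); split; first by rewrite vpick0 -dimv_eq0 -lt0n.
  exact/fixedSpaceP.
by move: Yker; rewrite memv_ker lfunE => /eqP.
Qed.

Lemma positive_map_hermitian_traceless (C : numClosedFieldType) n (phi : 'End('M[C]_n)) :
  positive_map phi -> (1 < \dim (fixedSpace phi))%N ->
  exists X, [/\ hermitian X, X != 0, phi X = X & \tr X = 0].
Proof.
move=> phi_pos /fixedSpace_traceless [Y [Y0 fixY trY]].
have fix_adj : phi (adjmx Y) = adjmx Y by rewrite positive_map_adjmx // fixY.
have tr_adj : \tr (adjmx Y) = 0 by rewrite mxtrace_adjmx trY rmorph0.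
have [re0|re_neq0] := eqVneq (herm_re Y) 0; last first.
  exists (herm_re Y); split; rewrite ?hermitian_herm_re //.
    by rewrite linearD /= fixY fix_adj.
  by rewrite mxtraceD trY tr_adj addr0.
have [im0|im_neq0] := eqVneq (herm_im Y) 0; last first.
  exists (herm_im Y); split; rewrite ?hermitian_herm_im //.
    by rewrite linearZ linearB /= fixY fix_adj.
  by rewrite mxtraceZ raddfB /= trY tr_adj subr0 mulr0.
by move: Y0; rewrite (herm_reim_eq0 re0 im0) eqxx.
Qed.

Theorem mainTheorem6 (C : numClosedFieldType) (d : nat) (phi : 'End('M[C]_d))
  (hpos : positive_map phi) (htp : trace_preserving phi)
  (hfix : (1 < \dim (fixedSpace phi))%N) :
  exists A : 'M[C]_d, [/\ A != 0, psd A, \det A = 0 & phi A = A].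
Proof.
have [X [hX X0 fixX trX]] := positive_map_hermitian_traceless hpos hfix.
have [[i di_gt0] [j dj_lt0]] := traceless_spectral_diag_sign hX trX X0.
exists (posmx X); split.
- exact: posmx_neq0 di_gt0.
- exact: psd_posmx.
- exact: det_posmx dj_lt0.
- exact: posmx_fixed.
Qed.
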